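(* Let $d\in\{2,3\}$, let $D\in\mathbb{R}^{d\times m}$ and consider a TPS warp with control centers $c_1,\dots,c_l\in\mathbb{R}^d$ and parameter $\lambda$. Let $R\in\mathbb{R}^{d\times d}$ be a rotation and $t\in\mathbb{R}^d$, and apply the same rigid transformation to the datum shape and to the control centers: $D'=RD+t\mathbf{1}^{\top}$ and $c_j'=Rc_j+t$. Denote by $\mathcal{B}(\cdot)$, $Z$ the TPS feature lifting and regularization matrix built from $c_1,\dots,c_l$, and by $\mathcal{B}'(\cdot)$, $Z'$ those built from $c_1',\dots,c_l'$ (same $\lambda$). Then $\mathcal{B}'(D')=\mathcal{B}(D)$ and $Z'=Z$.
   Context: TPS construction: kernel $\phi(r)=r^2\log(r^2)$ ($d=2$) or $\phi(r)=-|r|$ ($d=3$); $K_\lambda\in\mathbb{R}^{l\times l}$ has diagonal entries $\lambda$ and off-diagonal entries $\phi(\|c_j-c_k\|)$; $\tilde{C}=[\tilde{c}_1,\dots,\tilde{c}_l]$ with $\tilde{c}_j=[c_j^{\top},1]^{\top}$; $K_\lambda$ and $\tilde{C}K_\lambda^{-1}\tilde{C}^{\top}$ are assumed invertible; $\bar{\mathcal{E}}_\lambda=K_\lambda^{-1}-K_\lambda^{-1}\tilde{C}^{\top}(\tilde{C}K_\lambda^{-1}\tilde{C}^{\top})^{-1}\tilde{C}K_\lambda^{-1}$ (bending energy matrix, positive semidefinite in the paper's setting) and $\mathcal{E}_\lambda=\begin{bmatrix}\bar{\mathcal{E}}_\lambda\\ (\tilde{C}K_\lambda^{-1}\tilde{C}^{\top})^{-1}\tilde{C}K_\lambda^{-1}\end{bmatrix}$;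 for $p\in\mathbb{R}^d$, $\beta(p)=\mathcal{E}_\lambda^{\top}\begin{bmatrix}\phi_p\\ \tilde{p}\end{bmatrix}$ with $\phi_p=[\phi(\|p-c_j\|)]_{j=1}^l$ and $\tilde{p}=[p^{\top},1]^{\top}$; $\mathcal{B}(D)=[\beta(p_1),\dots,\beta(p_m)]$ for $D=[p_1,\dots,p_m]$; $Z=\sqrt{\bar{\mathcal{E}}_\lambda}$ is the symmetric positive semidefinite square root. $\mathbf{1}\in\mathbb{R}^m$ is the all-ones vector. *)

From HB Require Import structures.
From mathcomp Require Import all_boot all_order all_algebra.
From mathcomp Require Import boolp classical_sets reals exp.
Set Implicit Arguments. Unset Strict Implicit. Unset Printing Implicit Defensive.
Import Order.TTheory GRing.Theory Num.Theory.
Local Open Scope ring_scope.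

(* TPS kernel: phi(r) = r^2 log(r^2) if d = 2, and -|r| otherwise (d = 3).
   At r = 0 the first gives 0 (ln 0 = 0 in mathcomp-analysis, and the usual
   convention 0 log 0 = 0). *)
Definition tps_phi (R : realType) (d : nat) (r : R) : R :=
  if d == 2%N then r ^+ 2 * ln (r ^+ 2) else - `|r|.

Definition enorm (R : realType) (n : nat) (v : 'cV[R]_n) : R :=
  Num.sqrt (\sum_(i < n) v i 0 ^+ 2).

Definition Klam (R : realType) (d l : nat) (C : 'M[R]_(d, l)) (lam : R)
  : 'M[R]_l :=
  \matrix_(j, k) if j == k then lam else tps_phi d (enorm (col j C - col k C)).

Definition Ctil (R : realType) (d l : nat) (C : 'M[R]_(d, l)) : 'M[R]_(d + 1, l) :=
  col_mx C (const_mx 1).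

Definition Mlam (R : realType) (d l : nat) (C : 'M[R]_(d, l)) (lam : R)
  : 'M[R]_(d + 1) :=
  Ctil C *m invmx (Klam C lam) *m (Ctil C)^T.

Definition Ebar (R : realType) (d l : nat) (C : 'M[R]_(d, l)) (lam : R)
  : 'M[R]_l :=
  invmx (Klam C lam)
  - invmx (Klam C lam) *m (Ctil C)^T *m invmx (Mlam C lam) *m Ctil C
      *m invmx (Klam C lam).

Definition Elam (R : realType) (d l : nat) (C : 'M[R]_(d, l)) (lam : R)
  : 'M[R]_(l + (d + 1), l) :=
  col_mx (Ebar C lam) (invmx (Mlam C lam) *m Ctil C *m invmx (Klam C lam)).

Definition phivec (R : realType) (d l : nat) (C : 'M[R]_(d, l)) (p : 'cV[R]_d)
  : 'cV[R]_l :=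
  \col_j tps_phi d (enorm (p - col j C)).

Definition tps_beta (R : realType) (d l : nat) (C : 'M[R]_(d, l)) (lam : R)
  (p : 'cV[R]_d) : 'cV[R]_l :=
  (Elam C lam)^T *m col_mx (phivec C p) (col_mx p (const_mx 1 : 'cV[R]_1)).

Definition tps_B (R : realType) (d l m : nat) (C : 'M[R]_(d, l)) (lam : R)
  (D : 'M[R]_(d, m)) : 'M[R]_(l, m) :=
  \matrix_(i, k) tps_beta C lam (col k D) i 0.

Definition psd (R : realType) (n : nat) (A : 'M[R]_n) : Prop :=
  forall v : 'cV[R]_n, 0 <= (v^T *m A *m v) 0 0.

(* the symmetric positive semidefinite square root (chosen by choice among
   the symmetric psd Z with Z Z = E; such Z is unique when it exists) *)
Definition psd_sqrt (R : realType) (n : nat) (E : 'M[R]_n) : 'M[R]_n :=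
  xget 0 [set Z : 'M[R]_n | Z^T = Z /\ psd Z /\ Z *m Z = E].

Definition tps_Z (R : realType) (d l : nat) (C : 'M[R]_(d, l)) (lam : R)
  : 'M[R]_l := psd_sqrt (Ebar C lam).

(* A rigid motion x |-> Q x + t preserves all distances, so K_lambda and the
   kernel vectors phi_p do not change. The homogeneous coordinates [c; 1] and
   [p; 1] are multiplied by the invertible matrix A = [Q t; 0 1]. With
   W = K_lambda^-1, E-bar_lambda depends on C-tilde only through
   C-tilde^T (C-tilde W C-tilde^T)^-1 C-tilde, which is unchanged when
   C-tilde is replaced by A C-tilde; the factor A^-T picked up by the lower
   block of E_lambda cancels against A [p; 1]. *)

From HB Require Import structures.
From mathcomp Require Import all_boot all_order all_algebra.
From mathcomp Require Import boolp classical_sets reals exp.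
Set Implicit Arguments. Unset Strict Implicit. Unset Printing Implicit Defensive.
Import Order.TTheory GRing.Theory Num.Theory.
Local Open Scope ring_scope.

Definition rigid_motion (R : pzRingType) (d n : nat) (Q : 'M[R]_d) (t : 'cV[R]_d)
  (X : 'M[R]_(d, n)) : 'M[R]_(d, n) :=
  Q *m X + t *m const_mx 1.

Definition affine_mx (R : pzRingType) (d : nat) (Q : 'M[R]_d) (t : 'cV[R]_d)
  : 'M[R]_(d + 1) :=
  block_mx Q t 0 1%:M.

Section GramCongruence.
Variable R : comUnitRingType.

Lemma invmxM (n : nat) (X Y : 'M[R]_n) :
  X \in unitmx -> Y \in unitmx -> invmx (X *m Y) = invmx Y *m invmx X.
Proof.
move=> uX uY; have uXY : X *m Y \in unitmx by rewrite unitmx_mul uX uY.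
by rewrite -[RHS](mulmxK uXY) !mulmxA (mulmxKV uX) (mulVmx uY) mul1mx.
Qed.

Variables (k l : nat) (A : 'M[R]_k) (W : 'M[R]_l) (B : 'M[R]_(k, l)).
Hypotheses (uA : A \in unitmx) (uG : B *m W *m B^T \in unitmx).

Lemma invmx_gram_mulmxl :
  invmx (A *m B *m W *m (A *m B)^T) *m (A *m B)
  = invmx A^T *m invmx (B *m W *m B^T) *m B.
Proof.
have uAT : A^T \in unitmx by rewrite unitmx_tr.
have -> : A *m B *m W *m (A *m B)^T = A *m (B *m W *m B^T) *m A^T.
  by rewrite trmx_mul !mulmxA.
rewrite invmxM ?unitmx_mul ?uA // invmxM //.
by rewrite !mulmxA (mulmxKV uA).
Qed.

Lemma gram_proj_mulmxl (n : nat) (X : 'M[R]_(n, l)) :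
  X *m (A *m B)^T *m invmx (A *m B *m W *m (A *m B)^T) *m (A *m B)
  = X *m B^T *m invmx (B *m W *m B^T) *m B.
Proof.
have uAT : A^T \in unitmx by rewrite unitmx_tr.
by rewrite -mulmxA invmx_gram_mulmxl trmx_mul !mulmxA (mulmxK uAT).
Qed.

End GramCongruence.

Section AffineMap.
Variables (R : comUnitRingType) (d : nat) (Q : 'M[R]_d) (t : 'cV[R]_d).

Lemma col_rigid_motion (n : nat) (X : 'M[R]_(d, n)) j :
  col j (rigid_motion Q t X) = rigid_motion Q t (col j X).
Proof.
apply/matrixP => i k; rewrite !mxE.
by congr (_ + _); apply: eq_bigr => s _; rewrite !mxE.
Qed.

Lemma rigid_motionB (n : nat) (X Y : 'M[R]_(d, n)) :
  rigid_motion Q t X - rigid_motion Q t Y = Q *m (X - Y).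
Proof. by rewrite /rigid_motion mulmxBr opprD addrACA subrr addr0. Qed.

Lemma affine_mx_unit : Q \in unitmx -> affine_mx Q t \in unitmx.
Proof. by rewrite !unitmxE /affine_mx det_ublock det1 mulr1. Qed.

Lemma unitmx_orthogonal : Q^T *m Q = 1%:M -> Q \in unitmx.
Proof. by case/mulmx1_unit; rewrite unitmx_tr. Qed.

End AffineMap.

Section RigidMotion.
Variables (R : realType) (d : nat) (Q : 'M[R]_d) (t : 'cV[R]_d).

Lemma Ctil_rigid_motion (n : nat) (X : 'M[R]_(d, n)) :
  Ctil (rigid_motion Q t X) = affine_mx Q t *m Ctil X.
Proof.
rewrite /Ctil /affine_mx mul_block_col mul0mx mul1mx add0r.
by congr col_mx; apply/matrixP => i j; rewrite !mxE !big_ord1 !mxE.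
Qed.

Hypothesis orthQ : Q^T *m Q = 1%:M.

Lemma enorm_orthogonal (v : 'cV[R]_d) : enorm (Q *m v) = enorm v.
Proof.
have enormE (w : 'cV[R]_d) : enorm w = Num.sqrt ((w^T *m w) 0 0).
  by rewrite /enorm !mxE; congr Num.sqrt; apply: eq_bigr => i _; rewrite !mxE.
by rewrite !enormE trmx_mul -mulmxA (mulmxA Q^T) orthQ mul1mx.
Qed.

Lemma Klam_rigid_motion (l : nat) (C : 'M[R]_(d, l)) lam :
  Klam (rigid_motion Q t C) lam = Klam C lam.
Proof.
by apply/matrixP => j k; rewrite !mxE !col_rigid_motion rigid_motionB enorm_orthogonal.
Qed.

Lemma phivec_rigid_motion (l : nat) (C : 'M[R]_(d, l)) (p : 'cV[R]_d) :
  phivec (rigid_motion Q t C) (rigid_motion Q t p) = phivec C p.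
Proof.
by apply/matrixP => j k; rewrite !mxE col_rigid_motion rigid_motionB enorm_orthogonal.
Qed.

End RigidMotion.

Section TPSInvariance.
Variables (R : realType) (d l : nat) (Q : 'M[R]_d) (t : 'cV[R]_d).
Variables (C : 'M[R]_(d, l)) (lam : R).
Hypotheses (orthQ : Q^T *m Q = 1%:M) (uM : Mlam C lam \in unitmx).

Let A := affine_mx Q t.
Let uA : A \in unitmx := affine_mx_unit t (unitmx_orthogonal orthQ).

Lemma Ebar_rigid_motion : Ebar (rigid_motion Q t C) lam = Ebar C lam.
Proof.
by rewrite /Ebar /Mlam Klam_rigid_motion // Ctil_rigid_motion -/A gram_proj_mulmxl.
Qed.

Lemma tps_beta_rigid_motion (p : 'cV[R]_d) :
  tps_beta (rigid_motion Q t C) lam (rigid_motion Q t p) = tps_beta C lam p.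
Proof.
rewrite /tps_beta phivec_rigid_motion //.
change (col_mx (rigid_motion Q t p) (const_mx 1)) with (Ctil (rigid_motion Q t p)).
rewrite Ctil_rigid_motion /Elam Ebar_rigid_motion /Mlam Klam_rigid_motion //.
rewrite Ctil_rigid_motion -/A invmx_gram_mulmxl //.
rewrite !(tr_col_mx (Ebar C lam)) !mul_row_col; congr (_ + _).
by rewrite !trmx_mul [in (invmx A^T)^T]trmx_inv trmxK -!mulmxA mulKmx.
Qed.

Lemma tps_B_rigid_motion (m : nat) (D : 'M[R]_(d, m)) :
  tps_B (rigid_motion Q t C) lam (rigid_motion Q t D) = tps_B C lam D.
Proof.
apply/matrixP => i k; rewrite mxE [RHS]mxE.
by rewrite col_rigid_motion tps_beta_rigid_motion.
Qed.

End TPSInvariance.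

Theorem proposition9 (R : realType) (d m l : nat) (hd : d = 2%N \/ d = 3%N)
  (lam : R) (C : 'M[R]_(d, l)) (D : 'M[R]_(d, m))
  (Q : 'M[R]_d) (t : 'cV[R]_d)
  (hQorth : Q^T *m Q = 1%:M) (hQdet : \det Q = 1)
  (hK : Klam C lam \in unitmx) (hM : Mlam C lam \in unitmx) :
  let D' := Q *m D + t *m (const_mx 1 : 'rV[R]_m) in
  let C' := Q *m C + t *m (const_mx 1 : 'rV[R]_l) in
  tps_B C' lam D' = tps_B C lam D /\ tps_Z C' lam = tps_Z C lam.
Proof.
split; first exact: tps_B_rigid_motion.
by rewrite /tps_Z Ebar_rigid_motion.
Qed.
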